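(* Let $\mathfrak g$ be of type $A_2$, $\lambda,\mu\in P^+$, and let $\mathbf s\in\mathbb Z_+^3$ with $\mathbf s\notin\mathcal S^{A}_{\lambda,\mu}$. Then there exist finitely many $\mathbf s'\in\mathbb Z_+^3$ with $\mathbf s'\prec\mathbf s$ and elements $c_{\mathbf s'}\in\mathbf U(\mathfrak n^-\otimes1)$ such that in $\mathcal F_{\lambda,\mu}$ $$\Big(X_{\mathbf s}+\sum_{\mathbf s'\prec\mathbf s}c_{\mathbf s'}X_{\mathbf s'}\Big)v=0.$$
   Context: $\mathfrak g$ is the simple Lie algebra of type $A_2$ with Cartan subalgebra $\mathfrak h$, simple roots $\alpha_1,\alpha_2$, coroots $h_1,h_2$, positive roots $R^+$ written $(r_1,r_2)$ for $r_1\alpha_1+r_2\alpha_2$ (namely $(1,0),(0,1),(1,1)$), coroots $h_\alpha$, Chevalley basis $\{x^\pm_\alpha,h_i\}$, $\mathfrak n^\pm=\mathrm{span}\{x^\pm_\alpha\}$, dominant weights $P^+$; $m_i=\lambda(h_i)$, $n_i=\mu(h_i)$; $x^{(s)}=x^s/s!$. $\mathcal F_{\lambda,\mu}$ is the cyclic $\mathbf U(\mathfrak g\otimes\mathbb C[t])$-module generated by $v\ne0$ with relations $(\mathfrak n^+\otimes\mathbb C[t])v=0$; $(h\otimes t^r)v=\delta_{r,0}(\lambda+\mu)(h)v$ ($h\in\mathfrak h$); and for $\alpha\in R^+$: $(x^-_\alpha\otimes1)^{(\lambda+\mu)(h_\alpha)+1}v=0$, $(x^-_\alpha\otimes t)^{\min\{\lambda(h_\alpha),\mu(h_\alpha)\}+1}v=0$,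 $(x^-_\alpha\otimes t^r)v=0$ for $r\ge2$. $X_{(a,b,c)}=(x^-_{(1,0)}\otimes t)^{(a)}(x^-_{(1,1)}\otimes t)^{(b)}(x^-_{(0,1)}\otimes t)^{(c)}$. $\mathcal S^{A}_{\lambda,\mu}=\{(a,b,c)\in\mathbb Z_+^3: a\le\min\{m_1,n_1\},\ c\le\min\{m_2,n_2\},\ a+b+c\le\min\{m_1+m_2,n_1+n_2\},\ 2a+b\le m_1+n_1,\ 2c+b\le m_2+n_2\}$. Total order on $\mathbb Z_+^3$: $(a,b,c)\succ(a',b',c')$ iff $c<c'$, or $c=c'$ and $a<a'$, or $c=c'$, $a=a'$ and $b<b'$. *)

From HB Require Import structures.
From mathcomp Require Import all_boot all_order all_algebra algC.
Set Implicit Arguments. Unset Strict Implicit. Unset Printing Implicit Defensive.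
Import Order.TTheory GRing.Theory Num.Theory.
Local Open Scope ring_scope.

(* The current algebra  g (x) C[t]  with g = sl_3 = type A_2 is realized as
   sl_3(C[t]) : 3x3 matrices with entries in C[t] (= algC polynomials) and
   zero trace; the Lie bracket is the matrix commutator. *)
Definition Lt := 'M[{poly algC}]_3.
Definition in_gt (a : Lt) : Prop := \tr a = 0.

Definition E (i j : 'I_3) (r : nat) : Lt := 'X^r *: delta_mx i j.

(* Chevalley basis (up to signs irrelevant here): simple roots alpha1 = (1,0),
   alpha2 = (0,1), alpha1+alpha2 = (1,1).
   x^+_(1,0) = E01, x^+_(0,1) = E12, x^+_(1,1) = E02 ; x^- = transposes;
   h_1 = E00 - E11, h_2 = E11 - E22. *)
Definition xm10 r := E 1 0 r.
Definition xm01 r := E 2 1 r.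
Definition xm11 r := E 2 0 r.
Definition h1 r := E 0 0 r - E 1 1 r.
Definition h2 r := E 1 1 r - E 2 2 r.

Record is_rep (V : lmodType algC) (rho : Lt -> V -> V) : Prop := {
  rep_linv : forall a, in_gt a -> forall (c : algC) (u w : V),
      rho a (c *: u + w) = c *: rho a u + rho a w;
  rep_lina : forall a b, in_gt a -> in_gt b -> forall (c : algC) (u : V),
      rho (c%:P *: a + b) u = c *: rho a u + rho b u;
  rep_bracket : forall a b, in_gt a -> in_gt b -> forall u : V,
      rho (a *m b - b *m a) u = rho a (rho b u) - rho b (rho a u)
}.

Definition dpow (V : lmodType algC) (rho : Lt -> V -> V) (x : Lt) (s : nat)
  (u : V) : V := (s`!%:R : algC)^-1 *: iter s (rho x) u.

(* relations attached to a positive root alpha, given by x^-_alpha (x) t^r =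
   xm r, with l = lambda(h_alpha), k = mu(h_alpha) *)
Definition root_rel (V : lmodType algC) (rho : Lt -> V -> V) (xm : nat -> Lt)
  (l k : nat) (v : V) : Prop :=
  [/\ dpow rho (xm 0%N) (l + k).+1 v = 0,
      dpow rho (xm 1%N) (minn l k).+1 v = 0 &
      forall r, (2 <= r)%N -> rho (xm r) v = 0].

(* The defining relations of F_{lambda,mu} on the vector v, where
   lambda = (m1,m2), mu = (n1,n2) in fundamental-weight coordinates. *)
Definition F_rel (m1 m2 n1 n2 : nat) (V : lmodType algC)
  (rho : Lt -> V -> V) (v : V) : Prop :=
  [/\ forall (i j : 'I_3) r, (i < j)%N -> rho (E i j r) v = 0,
      forall r, rho (h1 r) v = (if r == 0%N then (m1 + n1)%:R else 0) *: v,
      forall r, rho (h2 r) v = (if r == 0%N then (m2 + n2)%:R else 0) *: v &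
      [/\ root_rel rho xm10 m1 n1 v,
           root_rel rho xm01 m2 n2 v &
           root_rel rho xm11 (m1 + m2) (n1 + n2) v]].

Definition Xs (V : lmodType algC) (rho : Lt -> V -> V) (s : nat * nat * nat)
  (v : V) : V :=
  let: (a, b, c) := s in
  dpow rho (xm10 1) a (dpow rho (xm11 1) b (dpow rho (xm01 1) c v)).

(* Elements of U(n^- (x) 1): finite linear combinations of words in the
   generators x^-_alpha (x) 1 (index 0 -> (1,0), 1 -> (0,1), 2 -> (1,1)). *)
Definition nm_gen (i : 'I_3) : Lt :=
  if val i == 0%N then xm10 0 else if val i == 1%N then xm01 0 else xm11 0.
Definition Unm := seq (algC * seq 'I_3).
Definition word_act (V : lmodType algC) (rho : Lt -> V -> V) (w : seq 'I_3)
  (u : V) : V := foldr (fun i u' => rho (nm_gen i) u') u w.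
Definition Unm_act (V : lmodType algC) (rho : Lt -> V -> V) (c : Unm) (u : V)
  : V := \sum_(p <- c) p.1 *: word_act rho p.2 u.

Definition inSA (m1 m2 n1 n2 : nat) (s : nat * nat * nat) : bool :=
  let: (a, b, c) := s in
  [&& (a <= minn m1 n1)%N, (c <= minn m2 n2)%N,
      (a + b + c <= minn (m1 + m2) (n1 + n2))%N,
      (2 * a + b <= m1 + n1)%N & (2 * c + b <= m2 + n2)%N].

Definition succ3 (s s' : nat * nat * nat) : bool :=
  let: (a, b, c) := s in let: (a', b', c') := s' in
  [|| (c < c')%N, (c == c') && (a < a')%N | [&& c == c', a == a' & (b < b')%N]].
Definition prec3 (s' s : nat * nat * nat) : bool := succ3 s s'.

From HB Require Import structures.
From mathcomp Require Import all_boot all_order all_algebra algC ring zify.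
Import GRing.Theory Num.Theory.
Set Implicit Arguments. Unset Strict Implicit. Unset Printing Implicit Defensive.
Local Open Scope ring_scope.

(* Write
   f1, f3, f2 for x^-_{(1,0)}, x^-_{(1,1)}, x^-_{(0,1)} (x) t, F1, F2 for
   x^-_{alpha_i} (x) 1, and mon a b c = f1^a f3^b f2^c v, so that X_s v is a
   nonzero multiple of mon s.  If s = (a,b,c) is not in S^A, one of the five
   defining inequalities fails:
   - a > min(m1,n1) or c > min(m2,n2): mon s = 0 by the relations on f1, f2;
   - a+b+c > min(m1+m2,n1+n2): mon s = 0, obtained from f3^{N} v = 0 by
     applying the raising operators x^+_{alpha_i} (x) 1, which trade f3 for
     f2 or f1 with nonzero coefficients;
   - 2a+b > m1+n1: Garland's sl_2 identity gives F1^K f1^a v = 0 with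
     K = m1+n1+1-2a; applying f3^{b-K} f2^{K+c} and moving f2 past F1 (a
     binomial expansion, [f2,F1] = f3) gives mon s + sum_{j<K} c_j F1^{K-j}
     mon (a, j+b-K, K+c-j) = 0, whose terms are smaller (larger c);
   - 2c+b > m2+n2: symmetrically with F2 and f1 (larger a, same c). *)

Section LinearOperators.
Variables (R : pzRingType) (V : lmodType R).
Implicit Types (P Q S : V -> V).

Lemma lin0 P : linear P -> P 0 = 0.
Proof.
move=> hP; have := hP 1 0 0; rewrite scaler0 addr0 scale1r => /eqP.
by rewrite -subr_eq subrr eq_sym => /eqP.
Qed.

Lemma linD P : linear P -> forall x y, P (x + y) = P x + P y.
Proof. by move=> hP x y; have := hP 1 x y; rewrite !scale1r. Qed.

Lemma linZ P : linear P -> forall c x, P (c *: x) = c *: P x.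
Proof. by move=> hP c x; have := hP c x 0; rewrite !addr0 lin0 // addr0. Qed.

Lemma linN P : linear P -> forall x, P (- x) = - P x.
Proof. by move=> hP x; rewrite -scaleN1r linZ // scaleN1r. Qed.

Lemma lin_sum P : linear P ->
  forall (I : Type) (r : seq I) (F : I -> V), P (\sum_(i <- r) F i) = \sum_(i <- r) P (F i).
Proof.
move=> hP I r F; elim: r => [|x r IH]; first by rewrite !big_nil lin0.
by rewrite !big_cons linD // IH.
Qed.

Lemma lin_iter P n : linear P -> linear (iter n P).
Proof. by move=> hP; elim: n => [|n IH] c x y //=; rewrite IH hP. Qed.
Arguments lin_iter {P n}.

Lemma iter_opp P n x :
  linear P -> iter n (fun y => - P y) x = (-1) ^+ n *: iter n P x.
Proof.
move=> hP; elim: n => [|n IH] /=; first by rewrite expr0 scale1r.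
by rewrite IH linZ // exprS -scaleN1r scalerA.
Qed.

Lemma iter_comm P Q n :
  (forall y, P (Q y) = Q (P y)) -> forall y, P (iter n Q y) = iter n Q (P y).
Proof. by move=> h; elim: n => [|n IH] y //=; rewrite h IH. Qed.
Arguments iter_comm {P Q n}.

Lemma iter_commutator P Q S : linear Q ->
  (forall y, P (Q y) = Q (P y) + S y) -> (forall y, S (Q y) = Q (S y)) ->
  forall k y, P (iter k Q y) = iter k Q (P y) + k%:R *: iter k.-1 Q (S y).
Proof.
move=> hQ hPQ hSQ; elim=> [|k IH] y /=; first by rewrite scale0r addr0.
rewrite hPQ IH linD // linZ // (iter_comm hSQ).
case: k IH => [|k] IH /=; first by rewrite scale0r addr0 scale1r.
by rewrite -addrA -{2}(scale1r (Q (iter k Q (S y)))) -scalerDl natr1.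
Qed.

Lemma big_ord_trunc (M : nmodType) (F : nat -> M) n K :
  (K <= n)%N -> (forall j, (K < j)%N -> F j = 0) ->
  \sum_(j < n.+1) F j = \sum_(j < K.+1) F j.
Proof.
move=> hKn hF; rewrite -(big_mkord xpredT F) -(big_mkord xpredT F).
rewrite (big_cat_nat (leq0n K.+1) (_ : K.+1 <= n.+1)%N) //=.
rewrite [X in _ + X]big1_seq ?addr0 // => j /andP[_].
by rewrite mem_index_iota => /andP[/hF].
Qed.

Section BinomialExpansion.
Variables (P Q S : V -> V).
Hypotheses (hP : linear P) (hQ : linear Q)
  (hPQ : forall y, P (Q y) = Q (P y) + S y) (hSQ : forall y, S (Q y) = Q (S y))
  (hPS : forall y, P (S y) = S (P y)).

Lemma iter_binomial n k y : iter n P (iter k Q y) =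
  \sum_(j < n.+1) ('C(n, j) * k ^_ j)%:R *: iter (k - j) Q (iter j S (iter (n - j) P y)).
Proof.
elim: n k y => [|n IH] k y.
  by rewrite big_ord1 /= bin0 ffactn0 scale1r subn0.
rewrite iterSr (iter_commutator hQ hPQ hSQ) (linD (lin_iter hP)).
rewrite (linZ (lin_iter hP)) !IH.
rewrite big_ord_recl [in RHS]big_ord_recl /= bin0 !ffactn0 !mul1n subn0 /bump /=.
rewrite !scale1r -iterSr -iterS -!addrA; congr (_ + _); first by rewrite subn0.
under [in RHS]eq_bigr => j _ do rewrite add1n add0n binS mulnDl natrD scalerDl.
rewrite big_split /=; congr (_ + _).
  rewrite big_ord_recr /= bin_small // mul0n scale0r addr0.
  by apply: eq_bigr => j _; rewrite add1n add0n subSS -iterSr subnSK.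
rewrite scaler_sumr; apply: eq_bigr => j _.
rewrite scalerA -natrM mulnCA -ffactnS.
rewrite -(iter_comm (fun y => esym (hPS y))) -iterSr iterS.
by congr (_ *: iter _ Q _); rewrite -subn1 -subnDA add1n.
Qed.

Lemma iter_binomial_le n k y : (k <= n)%N -> iter n P (iter k Q y) =
  \sum_(j < k.+1) ('C(n, j) * k ^_ j)%:R *: iter (k - j) Q (iter j S (iter (n - j) P y)).
Proof.
move=> hkn; rewrite iter_binomial (big_ord_trunc (F := fun j =>
  ('C(n, j) * k ^_ j)%:R *: iter (k - j) Q (iter j S (iter (n - j) P y))) hkn) //.
by move=> j hj; rewrite ffact_small // muln0 scale0r.
Qed.

End BinomialExpansion.

End LinearOperators.
Arguments lin_iter {R V P n}.
Arguments iter_comm {R V P Q n}.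

(* The
   operators e, h1, h2, x0, .., x3 stand for x^+ (x) t, h (x) t, h (x) t^2
   and x^- (x) t^r; v is killed by e, h1, h2, x2, x3.  If x0^N v = 0 then
   x0^(N-2i) x1^i v = 0: the operator e lowers the x0-degree by two and
   raises the x1-degree by one, with a nonzero coefficient. *)
Section GarlandVanishing.
Variables (F : numFieldType) (V : lmodType F).
Variables (e h1 h2 x0 x1 x2 x3 : V -> V) (v : V).
Hypotheses (lin_e : linear e) (lin_x0 : linear x0) (lin_x1 : linear x1).
Hypotheses (e_x0 : forall w, e (x0 w) = x0 (e w) + h1 w)
  (h1_x0 : forall w, h1 (x0 w) = x0 (h1 w) - 2 *: x1 w)
  (x1_x0 : forall w, x1 (x0 w) = x0 (x1 w))
  (e_x1 : forall w, e (x1 w) = x1 (e w) + h2 w)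
  (h2_x1 : forall w, h2 (x1 w) = x1 (h2 w) - 2 *: x3 w)
  (h1_x1 : forall w, h1 (x1 w) = x1 (h1 w) - 2 *: x2 w)
  (x2_x1 : forall w, x2 (x1 w) = x1 (x2 w))
  (x3_x1 : forall w, x3 (x1 w) = x1 (x3 w)).
Hypotheses (e_v : e v = 0) (h1_v : h1 v = 0) (h2_v : h2 v = 0)
  (x2_v : x2 v = 0) (x3_v : x3 v = 0).

Lemma x1_powers_killed r :
  let w := iter r x1 v in [/\ x3 w = 0, x2 w = 0, h2 w = 0, h1 w = 0 & e w = 0].
Proof.
elim: r => [|r [k3 k2 kh2 kh1 ke]] //=.
by rewrite x3_x1 x2_x1 h2_x1 h1_x1 e_x1 k3 k2 kh2 kh1 ke (lin0 lin_x1) !scaler0 !subr0 addr0.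
Qed.

Lemma h1_x0_powers r k :
  h1 (iter k x0 (iter r x1 v)) = - (2 * k)%:R *: iter k.-1 x0 (iter r.+1 x1 v).
Proof.
elim: k => [|k IH] /=.
  by have [_ _ _ -> _] := x1_powers_killed r; rewrite muln0 oppr0 scale0r.
rewrite h1_x0 IH (iter_comm x1_x0) (linZ lin_x0) /=.
case: k {IH} => [|k] /=; last by rewrite -scalerBl; congr (_ *: _); ring.
by rewrite muln0 oppr0 scale0r sub0r -scaleNr; congr (_ *: _); ring.
Qed.

Lemma e_x0_powers r k :
  e (iter k x0 (iter r x1 v)) = - (k * k.-1)%:R *: iter k.-2 x0 (iter r.+1 x1 v).
Proof.
elim: k => [|k IH] /=.
  by have [_ _ _ _ ->] := x1_powers_killed r; rewrite mul0n oppr0 scale0r.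
rewrite e_x0 IH h1_x0_powers (linZ lin_x0).
case: k {IH} => [|[|k]] /=; last by rewrite -scalerDl; congr (_ *: _); ring.
  by rewrite !mul0n muln0 oppr0 !scale0r addr0.
by rewrite muln0 oppr0 scale0r add0r.
Qed.

Lemma garland_vanishing N i :
  iter N x0 v = 0 -> (2 * i <= N)%N -> iter (N - 2 * i) x0 (iter i x1 v) = 0.
Proof.
move=> hN; elim: i => [|i IH] hi; first by rewrite muln0 subn0.
have hi' : (2 * i <= N)%N by lia.
have := congr1 e (IH hi').
rewrite e_x0_powers (lin0 lin_e) => /eqP.
rewrite scaler_eq0 oppr_eq0 pnatr_eq0 muln_eq0 => /orP[/orP[]/eqP|/eqP]; try lia.
by have -> : (N - 2 * i.+1 = (N - 2 * i).-2)%N by lia.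
Qed.

End GarlandVanishing.

Lemma mulE (i j k l : 'I_3) r s :
  E i j r *m E k l s = if j == k then E i l (r + s) else 0.
Proof.
rewrite /E -scalemxAl -scalemxAr scalerA -exprD mul_delta_mx_cond.
by case: (j == k); rewrite ?mulr1n ?mulr0n ?scaler0.
Qed.

Lemma E_in_gt (i j : 'I_3) r : i != j -> in_gt (E i j r).
Proof.
move=> hij; rewrite /in_gt /E mxtraceZ /mxtrace big1 ?mulr0 // => k _.
by rewrite mxE; case: eqP => [->|] //=; rewrite (negbTE hij).
Qed.

Lemma trace_E_diag (i : 'I_3) r : \tr (E i i r) = 'X^r.
Proof.
rewrite /E mxtraceZ /mxtrace (bigD1 i) //= big1 ?mxE ?eqxx ?addr0 ?mulr1 //.
by move=> k hk; rewrite mxE (negbTE hk).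
Qed.

Definition hE (i j : 'I_3) r : Lt := E i i r - E j j r.

Lemma hE_in_gt (i j : 'I_3) r : in_gt (hE i j r).
Proof. by rewrite /in_gt /hE raddfB /= !trace_E_diag subrr. Qed.

Lemma in_gt0 : in_gt 0.
Proof. by rewrite /in_gt mxtrace0. Qed.

Section Representation.
Variables (V : lmodType algC) (rho : Lt -> V -> V).
Hypothesis hrep : is_rep rho.

Lemma rho_linear a : in_gt a -> linear (rho a).
Proof. by move=> ha c u w; rewrite (rep_linv hrep). Qed.

Lemma lin_E (i j : 'I_3) r : i != j -> linear (rho (E i j r)).
Proof. by move=> hij; apply: rho_linear; exact: E_in_gt. Qed.

Lemma rho_zero u : rho 0 u = 0.
Proof.
have := rep_lina hrep in_gt0 in_gt0 1 u.
by rewrite scaler0 addr0 scale1r => /eqP; rewrite addrC -subr_eq subrr eq_sym => /eqP.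
Qed.

Lemma rho_bracket a b c k u : in_gt a -> in_gt b -> in_gt c ->
  a *m b - b *m a = k%:P *: c -> rho a (rho b u) = rho b (rho a u) + k *: rho c u.
Proof.
move=> ha hb hc hab; have := rep_bracket hrep ha hb u.
rewrite hab -[k%:P *: c]addr0 (rep_lina hrep hc in_gt0) rho_zero addr0 => ->.
by rewrite addrC subrK.
Qed.

Lemma rho_commute a b u : in_gt a -> in_gt b -> a *m b - b *m a = 0 ->
  rho a (rho b u) = rho b (rho a u).
Proof.
move=> ha hb hab.
by rewrite (rho_bracket (c := 0) (k := 0)) ?scale0r ?addr0 ?hab ?scale0r //; exact: in_gt0.
Qed.

Ltac in_sl3 := solve [ by apply: E_in_gt | by apply: E_in_gt; rewrite eq_sym
                     | exact: hE_in_gt ].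

Lemma E_commute (k l k' l' : 'I_3) r s u : k != l -> k' != l' ->
  l != k' -> l' != k -> rho (E k l r) (rho (E k' l' s) u) = rho (E k' l' s) (rho (E k l r) u).
Proof.
move=> hkl hkl' hlk hlk'; apply: rho_commute; try in_sl3.
by rewrite !mulE (negbTE hlk) (negbTE hlk') subrr.
Qed.

Lemma E_chain (k l m : 'I_3) r s u : k != l -> l != m -> k != m ->
  rho (E k l r) (rho (E l m s) u) = rho (E l m s) (rho (E k l r) u) + rho (E k m (r + s)) u.
Proof.
move=> hkl hlm hkm; rewrite (rho_bracket (c := E k m (r + s)) (k := 1)) ?scale1r //; try in_sl3.
by rewrite !mulE eqxx eq_sym (negbTE hkm) subr0.
Qed.

Lemma E_chain_rev (k l m : 'I_3) r s u : k != l -> l != m -> k != m ->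
  rho (E l m s) (rho (E k l r) u) = rho (E k l r) (rho (E l m s) u) - rho (E k m (r + s)) u.
Proof. by move=> hkl hlm hkm; rewrite (E_chain _ _ _ hkl hlm hkm) addrK. Qed.

Lemma E_raise_lower (i j : 'I_3) r s u : i != j ->
  rho (E i j r) (rho (E j i s) u) = rho (E j i s) (rho (E i j r) u) + rho (hE i j (r + s)) u.
Proof.
move=> hij; rewrite (rho_bracket (c := hE i j (r + s)) (k := 1)) ?scale1r //; try in_sl3.
by rewrite !mulE !eqxx addnC.
Qed.

Lemma hE_lower (i j : 'I_3) r s u : i != j ->
  rho (hE i j r) (rho (E j i s) u) = rho (E j i s) (rho (hE i j r) u) - 2 *: rho (E j i (r + s)) u.
Proof.
move=> hij; rewrite (rho_bracket (c := E j i (r + s)) (k := -2)) ?scaleNr //; try in_sl3.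
rewrite /hE mulmxBl mulmxBr !mulE !eqxx (negbTE hij) (addnC s r) sub0r subr0.
by rewrite polyCN scaleNr -opprD polyC_natr scaler_nat mulr2n.
Qed.

Lemma root_garland (i j : 'I_3) N a (v : V) : i != j ->
  rho (E i j 1) v = 0 -> rho (hE i j 1) v = 0 -> rho (hE i j 2) v = 0 ->
  rho (E j i 2) v = 0 -> rho (E j i 3) v = 0 ->
  iter N (rho (E j i 0)) v = 0 -> (2 * a <= N)%N ->
  iter (N - 2 * a) (rho (E j i 0)) (iter a (rho (E j i 1)) v) = 0.
Proof.
move=> hij he hh1 hh2 hx2 hx3; have hji : j != i by rewrite eq_sym.
apply: (garland_vanishing (e := rho (E i j 1)) (h1 := rho (hE i j 1)) (h2 := rho (hE i j 2))
   (x2 := rho (E j i 2)) (x3 := rho (E j i 3))) => //; try (apply: rho_linear; in_sl3).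
all: by move=> w; first [exact: E_raise_lower | exact: hE_lower | exact: E_commute].
Qed.

End Representation.

Lemma dpow_eq0 (V : lmodType algC) (rho : Lt -> V -> V) x s u :
  dpow rho x s u = 0 -> iter s (rho x) u = 0.
Proof.
rewrite /dpow => /eqP; rewrite scaler_eq0 invr_eq0 pnatr_eq0.
by rewrite (gtn_eqF (fact_gt0 s)) => /eqP.
Qed.

Definition dp_coeff (t : nat * nat * nat) : algC :=
  let: (a, b, c) := t in ((a`! * b`! * c`!)%:R)^-1.

Lemma dp_coeff_neq0 t : dp_coeff t != 0.
Proof.
case: t => [[a b] c] /=; rewrite invr_eq0 pnatr_eq0 !muln_eq0.
by rewrite !(gtn_eqF (fact_gt0 _)).
Qed.

(* A relation sum_{j<=k} cf_j Y^(k-j) X_(sj j) v with top term s = sj k,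
   normalized so that X_s v has coefficient 1, as a list of pairs
   (s', c_s') with c_s' = (coefficient) Y^(k-j) in U(n^- (x) 1). *)
Definition relation_list (s : nat * nat * nat) (k : nat) (i : 'I_3)
    (sj : nat -> nat * nat * nat) (cf : nat -> algC) : seq ((nat * nat * nat) * Unm) :=
  [seq (sj j, [:: (dp_coeff s * (cf k)^-1 * cf j / dp_coeff (sj j), nseq (k - j) i)])
  | j <- index_iota 0 k].

Section CyclicVector.
Variables (m1 m2 n1 n2 : nat) (V : lmodType algC) (rho : Lt -> V -> V) (v : V).
Hypotheses (hrep : is_rep rho) (hF : F_rel m1 m2 n1 n2 rho v).

Local Notation F1 := (rho (E 1 0 0)).
Local Notation F2 := (rho (E 2 1 0)).
Local Notation f1 := (rho (E 1 0 1)).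
Local Notation f2 := (rho (E 2 1 1)).
Local Notation f3 := (rho (E 2 0 1)).
Local Notation g := (rho (E 2 0 2)).
Local Notation e1 := (rho (E 0 1 0)).
Local Notation e2 := (rho (E 1 2 0)).
Local Notation d3 := (minn (m1 + m2) (n1 + n2)).

Lemma lin_f1 : linear f1. Proof. exact: lin_E. Qed.
Lemma lin_f2 : linear f2. Proof. exact: lin_E. Qed.
Lemma lin_f3 : linear f3. Proof. exact: lin_E. Qed.
Lemma lin_F1 : linear F1. Proof. exact: lin_E. Qed.
Lemma lin_F2 : linear F2. Proof. exact: lin_E. Qed.
Lemma lin_e1 : linear e1. Proof. exact: lin_E. Qed.
Lemma lin_e2 : linear e2. Proof. exact: lin_E. Qed.

Section Brackets.
Variable u : V.
Lemma g_f1 : g (f1 u) = f1 (g u). Proof. exact: E_commute. Qed.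
Lemma g_f2 : g (f2 u) = f2 (g u). Proof. exact: E_commute. Qed.
Lemma g_f3 : g (f3 u) = f3 (g u). Proof. exact: E_commute. Qed.
Lemma f3_f1 : f3 (f1 u) = f1 (f3 u). Proof. exact: E_commute. Qed.
Lemma f2_f3 : f2 (f3 u) = f3 (f2 u). Proof. exact: E_commute. Qed.
Lemma f3_F1 : f3 (F1 u) = F1 (f3 u). Proof. exact: E_commute. Qed.
Lemma f3_F2 : f3 (F2 u) = F2 (f3 u). Proof. exact: E_commute. Qed.
Lemma e1_f2 : e1 (f2 u) = f2 (e1 u). Proof. exact: E_commute. Qed.
Lemma e2_f1 : e2 (f1 u) = f1 (e2 u). Proof. exact: E_commute. Qed.
Lemma x2_f2 : rho (E 2 1 2) (f2 u) = f2 (rho (E 2 1 2) u). Proof. exact: E_commute. Qed.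
Lemma f2_f1 : f2 (f1 u) = f1 (f2 u) + g u. Proof. exact: E_chain. Qed.
Lemma f2_F1 : f2 (F1 u) = F1 (f2 u) + f3 u. Proof. exact: E_chain. Qed.
Lemma e2_f3 : e2 (f3 u) = f3 (e2 u) + f1 u. Proof. exact: E_chain. Qed.
Lemma f1_F2 : f1 (F2 u) = F2 (f1 u) - f3 u. Proof. exact: E_chain_rev. Qed.
Lemma e1_f3 : e1 (f3 u) = f3 (e1 u) - f2 u. Proof. exact: E_chain_rev. Qed.
Lemma e2_f2 : e2 (f2 u) = f2 (e2 u) + rho (h2 1) u. Proof. exact: E_raise_lower. Qed.
Lemma h2_f2 : rho (h2 1) (f2 u) = f2 (rho (h2 1) u) - 2 *: rho (E 2 1 2) u.
Proof. exact: hE_lower. Qed.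
End Brackets.

Lemma v_raise (i j : 'I_3) r : (i < j)%N -> rho (E i j r) v = 0.
Proof. by case: hF => h _ _ _; exact: h. Qed.
Lemma v_h1 r : r != 0%N -> rho (h1 r) v = 0.
Proof. by case: hF => _ h _ _ hr; rewrite h (negbTE hr) scale0r. Qed.
Lemma v_h2 r : r != 0%N -> rho (h2 r) v = 0.
Proof. by case: hF => _ _ h _ hr; rewrite h (negbTE hr) scale0r. Qed.
Lemma v_f1_high r : (2 <= r)%N -> rho (E 1 0 r) v = 0.
Proof. by case: hF => _ _ _ [[_ _ h] _ _]; exact: h. Qed.
Lemma v_f2_high r : (2 <= r)%N -> rho (E 2 1 r) v = 0.
Proof. by case: hF => _ _ _ [_ [_ _ h] _]; exact: h. Qed.
Lemma v_f3_high r : (2 <= r)%N -> rho (E 2 0 r) v = 0.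
Proof. by case: hF => _ _ _ [_ _ [_ _ h]]; exact: h. Qed.
Lemma v_F1_pow : iter (m1 + n1).+1 F1 v = 0.
Proof. by case: hF => _ _ _ [[h _ _] _ _]; exact: dpow_eq0 h. Qed.
Lemma v_f1_pow : iter (minn m1 n1).+1 f1 v = 0.
Proof. by case: hF => _ _ _ [[_ h _] _ _]; exact: dpow_eq0 h. Qed.
Lemma v_F2_pow : iter (m2 + n2).+1 F2 v = 0.
Proof. by case: hF => _ _ _ [_ [h _ _] _]; exact: dpow_eq0 h. Qed.
Lemma v_f2_pow : iter (minn m2 n2).+1 f2 v = 0.
Proof. by case: hF => _ _ _ [_ [_ h _] _]; exact: dpow_eq0 h. Qed.
Lemma v_f3_pow : iter d3.+1 f3 v = 0.
Proof. by case: hF => _ _ _ [_ _ [_ h _]]; exact: dpow_eq0 h. Qed.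

(* The ordered monomial f1^a f3^b f2^c v; on these vectors the three
   operators f1, f3, f2 act as if they commuted, since [f2,f1] = g kills
   them. *)
Definition mon (a b c : nat) : V := iter a f1 (iter b f3 (iter c f2 v)).
Definition mon3 (t : nat * nat * nat) : V := let: (a, b, c) := t in mon a b c.

Lemma g_mon a b c : g (mon a b c) = 0.
Proof.
rewrite /mon (iter_comm g_f1) (iter_comm g_f3) (iter_comm g_f2) v_f3_high //.
by rewrite (lin0 (lin_iter lin_f2)) (lin0 (lin_iter lin_f3)) (lin0 (lin_iter lin_f1)).
Qed.

Lemma iter_f1_mon z a b c : iter z f1 (mon a b c) = mon (a + z) b c.
Proof. by rewrite /mon addnC iterD. Qed.

Lemma iter_f3_mon z a b c : iter z f3 (mon a b c) = mon a (b + z) c.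
Proof.
have f3_mon a' b' c' : f3 (mon a' b' c') = mon a' b'.+1 c' by rewrite /mon (iter_comm f3_f1).
by elim: z => [|z IH]; rewrite ?addn0 //= IH f3_mon addnS.
Qed.

Lemma iter_f2_mon z a b c : iter z f2 (mon a b c) = mon a b (c + z).
Proof.
have f2_mon a' b' c' : f2 (mon a' b' c') = mon a' b' c'.+1.
  elim: a' => [|a' IH] /=; first by rewrite /mon /= (iter_comm f2_f3).
  by rewrite f2_f1 IH -/(mon a' b' c') g_mon addr0.
by elim: z => [|z IH]; rewrite ?addn0 //= IH f2_mon addnS.
Qed.

Lemma mon_zero_a a b c : (minn m1 n1 < a)%N -> mon a b c = 0.
Proof.
move=> ha; have -> : mon a b c = iter c f2 (iter b f3 (mon a 0 0)).
  by rewrite iter_f3_mon iter_f2_mon !add0n.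
rewrite /mon /= -(subnK ha) iterD v_f1_pow (lin0 (lin_iter lin_f1)).
by rewrite (lin0 (lin_iter lin_f3)) (lin0 (lin_iter lin_f2)).
Qed.

Lemma mon_zero_c a b c : (minn m2 n2 < c)%N -> mon a b c = 0.
Proof.
move=> hc; rewrite /mon -(subnK hc) iterD v_f2_pow (lin0 (lin_iter lin_f2)).
by rewrite (lin0 (lin_iter lin_f3)) (lin0 (lin_iter lin_f1)).
Qed.

Lemma e1_mon b c : e1 (mon 0 b c) = - b%:R *: mon 0 b.-1 c.+1.
Proof.
have e1_v : e1 (iter c f2 v) = 0.
  by rewrite (iter_comm e1_f2) v_raise // (lin0 (lin_iter lin_f2)).
have nf2_f3 y : - f2 (f3 y) = f3 (- f2 y) by rewrite (linN lin_f3) f2_f3.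
rewrite /mon /= (iter_commutator lin_f3 e1_f3 nf2_f3) e1_v (lin0 (lin_iter lin_f3)).
by rewrite add0r (linN (lin_iter lin_f3)) scalerN scaleNr.
Qed.

Lemma mon_zero_bc q : (q <= d3.+1)%N -> mon 0 (d3.+1 - q) q = 0.
Proof.
elim: q => [|q IH] hq; first by rewrite subn0; exact: v_f3_pow.
have := congr1 e1 (IH (ltnW hq)); rewrite e1_mon (lin0 lin_e1) => /eqP.
rewrite scaler_eq0 oppr_eq0 pnatr_eq0 => /orP[/eqP|/eqP]; first by lia.
by have -> : (d3.+1 - q.+1 = (d3.+1 - q).-1)%N by lia.
Qed.

Lemma e2_f2_powers m : e2 (iter m f2 v) = 0 /\ rho (h2 1) (iter m f2 v) = 0.
Proof.
elim: m => [|m [IH1 IH2]] /=; first by rewrite v_raise // v_h2.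
have hx2 : rho (E 2 1 2) (iter m f2 v) = 0.
  by rewrite (iter_comm x2_f2) v_f2_high // (lin0 (lin_iter lin_f2)).
by rewrite e2_f2 h2_f2 IH1 IH2 hx2 (lin0 lin_f2) scaler0 subr0 addr0.
Qed.

Lemma e2_mon a b c : e2 (mon a b c) = b%:R *: mon a.+1 b.-1 c.
Proof.
have f1_f3 y : f1 (f3 y) = f3 (f1 y) by rewrite f3_f1.
rewrite /mon (iter_comm e2_f1) (iter_commutator lin_f3 e2_f3 f1_f3).
have [-> _] := e2_f2_powers c; rewrite (lin0 (lin_iter lin_f3)) add0r.
by rewrite (linZ (lin_iter lin_f1)) -(iter_comm f1_f3) -iterSr.
Qed.

Lemma mon_zero_edge p q : (p + q <= d3.+1)%N -> mon p (d3.+1 - q - p) q = 0.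
Proof.
elim: p => [|p IH] hpq; first by rewrite subn0; apply: mon_zero_bc; lia.
have := congr1 e2 (IH (ltnW hpq)); rewrite e2_mon (lin0 lin_e2) => /eqP.
rewrite scaler_eq0 pnatr_eq0 => /orP[/eqP|/eqP]; first by lia.
by have -> : (d3.+1 - q - p.+1 = (d3.+1 - q - p).-1)%N by lia.
Qed.

(* Every monomial of total degree a+b+c > d3 vanishes: it is obtained from
   one on the edge p + r + q = d3 + 1 by further f-operators. *)
Lemma mon_zero_abc a b c : (d3 < a + b + c)%N -> mon a b c = 0.
Proof.
move=> habc; set p := minn a d3.+1; set q := minn c (d3.+1 - p).
have -> : mon a b c =
    iter (a - p) f1 (iter (b - (d3.+1 - q - p)) f3 (iter (c - q) f2 (mon p (d3.+1 - q - p) q))).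
  by rewrite iter_f2_mon iter_f3_mon iter_f1_mon; congr mon; rewrite /p /q; lia.
rewrite mon_zero_edge; last by rewrite /p /q; lia.
by rewrite (lin0 (lin_iter lin_f2)) (lin0 (lin_iter lin_f3)) (lin0 (lin_iter lin_f1)).
Qed.

Lemma garland_alpha1 a :
  (2 * a <= (m1 + n1).+1)%N -> iter ((m1 + n1).+1 - 2 * a) F1 (mon a 0 0) = 0.
Proof.
apply: (@root_garland _ _ hrep 0 1) => //;
  solve [exact: v_F1_pow | by apply: v_raise | by apply: v_h1 | by apply: v_f1_high].
Qed.

Lemma garland_alpha2 c :
  (2 * c <= (m2 + n2).+1)%N -> iter ((m2 + n2).+1 - 2 * c) F2 (mon 0 0 c) = 0.
Proof.
apply: (@root_garland _ _ hrep 1 2) => //;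
  solve [exact: v_F2_pow | by apply: v_raise | by apply: v_h2 | by apply: v_f2_high].
Qed.

Lemma iter_f3_F1 z k x : iter z f3 (iter k F1 x) = iter k F1 (iter z f3 x).
Proof. by apply: iter_comm => y; rewrite (iter_comm (fun w => esym (f3_F1 w))). Qed.

Lemma iter_f3_F2 z k x : iter z f3 (iter k F2 x) = iter k F2 (iter z f3 x).
Proof. by apply: iter_comm => y; rewrite (iter_comm (fun w => esym (f3_F2 w))). Qed.

(* The relation for 2a + b > m1 + n1: expand
   0 = f3^(b-K) f2^(K+c) F1^K f1^a v,  K = m1 + n1 + 1 - 2a,
   by the binomial formula for [f2,F1] = f3. *)
Lemma relation_alpha1 a b c : (a <= minn m1 n1)%N -> ((m1 + n1).+1 - 2 * a <= b)%N ->
  let K := ((m1 + n1).+1 - 2 * a)%N in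
  \sum_(j < K.+1) ('C(K + c, j) * K ^_ j)%:R *:
     iter (K - j) F1 (mon a (j + (b - K)) (K + c - j)) = 0.
Proof.
move=> ha hb K.
have hK : iter (b - K) f3 (iter (K + c) f2 (iter K F1 (mon a 0 0))) = 0.
  by rewrite garland_alpha1 ?(lin0 (lin_iter lin_f2)) ?(lin0 (lin_iter lin_f3)) //; lia.
rewrite -[RHS]hK (iter_binomial_le lin_f2 lin_F1 f2_F1 f3_F1 f2_f3 _ (leq_addr c K)).
rewrite (lin_sum (lin_iter lin_f3)).
apply: eq_bigr => j _; rewrite (linZ (lin_iter lin_f3)) iter_f3_F1.
by rewrite iter_f2_mon !iter_f3_mon !add0n addnC.
Qed.

(* The relation for 2c + b > m2 + n2: expand
   0 = f3^(b-K) f1^(K+a) F2^K f2^c v,  K = m2 + n2 + 1 - 2c,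
   by the binomial formula for [f1,F2] = -f3. *)
Lemma relation_alpha2 a b c : (c <= minn m2 n2)%N -> ((m2 + n2).+1 - 2 * c <= b)%N ->
  let K := ((m2 + n2).+1 - 2 * c)%N in
  \sum_(j < K.+1) ((-1) ^+ j * ('C(K + a, j) * K ^_ j)%:R) *:
     iter (K - j) F2 (mon (K + a - j) (j + (b - K)) c) = 0.
Proof.
move=> hc hb K.
have nf3_F2 y : - f3 (F2 y) = F2 (- f3 y) by rewrite (linN lin_F2) f3_F2.
have f1_nf3 y : f1 (- f3 y) = - f3 (f1 y) by rewrite (linN lin_f1) f3_f1.
have hK : iter (b - K) f3 (iter (K + a) f1 (iter K F2 (mon 0 0 c))) = 0.
  by rewrite garland_alpha2 ?(lin0 (lin_iter lin_f1)) ?(lin0 (lin_iter lin_f3)) //; lia.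
rewrite -[RHS]hK (iter_binomial_le lin_f1 lin_F2 f1_F2 nf3_F2 f1_nf3 _ (leq_addr a K)).
rewrite (lin_sum (lin_iter lin_f3)).
apply: eq_bigr => j _; rewrite (linZ (lin_iter lin_f3)) iter_f3_F2 (iter_opp _ _ lin_f3).
rewrite iter_f1_mon (linZ (lin_iter lin_f3)) (linZ (lin_iter lin_F2)) !iter_f3_mon /=.
by rewrite scalerA mulrC !add0n addnC.
Qed.

Lemma Xs_mon t : Xs rho t v = dp_coeff t *: mon3 t.
Proof.
case: t => [[a b] c]; rewrite /Xs /dpow /= /mon.
rewrite (linZ (lin_iter lin_f3)) (linZ (lin_iter lin_f1)) scalerA.
by rewrite (linZ (lin_iter lin_f1)) scalerA !natrM !invfM.
Qed.

Lemma word_act_nseq k i u : word_act rho (nseq k i) u = iter k (rho (nm_gen i)) u.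
Proof. by elim: k => [|k IH] //=; rewrite -IH. Qed.

Lemma relation_list_spec s k i sj cf : cf k != 0 -> sj k = s ->
  \sum_(j < k.+1) cf j *: iter (k - j) (rho (nm_gen i)) (mon3 (sj j)) = 0 ->
  Xs rho s v + \sum_(p <- relation_list s k i sj cf) Unm_act rho p.2 (Xs rho p.1 v) = 0.
Proof.
move=> hk hs; have lin_Y : linear (rho (nm_gen i)).
  apply: (rho_linear hrep); rewrite /nm_gen.
  by case: (val i == 0%N); last case: (val i == 1%N); apply: E_in_gt.
rewrite big_ord_recr /= subnn hs => /eqP; rewrite addr_eq0 => /eqP hsum.
set c := dp_coeff s * (cf k)^-1.
have -> : \sum_(p <- relation_list s k i sj cf) Unm_act rho p.2 (Xs rho p.1 v) =
    c *: \sum_(j < k) cf j *: iter (k - j) (rho (nm_gen i)) (mon3 (sj j)).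
  rewrite /relation_list big_map big_mkord scaler_sumr.
  apply: eq_bigr => j _; rewrite /Unm_act big_cons big_nil addr0 /= word_act_nseq.
  rewrite Xs_mon (linZ (lin_iter lin_Y)) !scalerA.
  by congr (_ *: _); rewrite divfK // dp_coeff_neq0.
by rewrite hsum Xs_mon scalerN scalerA /c -mulrA mulVf // mulr1 subrr.
Qed.

End CyclicVector.

Lemma vanishing_case m1 m2 n1 n2 a b c :
  [|| minn m1 n1 < a, minn m2 n2 < c | minn (m1 + m2) (n1 + n2) < a + b + c]%N ->
  forall (V : lmodType algC) (rho : Lt -> V -> V) (v : V),
    is_rep rho -> F_rel m1 m2 n1 n2 rho v -> Xs rho (a, b, c) v = 0.
Proof.
move=> hs V rho v hr hF; rewrite (Xs_mon v hr) /=.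
case/or3P: hs => [ha|hc|habc].
- by rewrite (mon_zero_a hr hF) ?scaler0.
- by rewrite (mon_zero_c hr hF) ?scaler0.
- by rewrite (mon_zero_abc hr hF) ?scaler0.
Qed.

(* Case 2a + b > m1 + n1 (with a <= min(m1,n1)): the terms have larger c. *)
Lemma alpha1_case m1 m2 n1 n2 a b c :
  (a <= minn m1 n1)%N -> (m1 + n1 < 2 * a + b)%N ->
  exists L : seq ((nat * nat * nat) * Unm),
    all (fun p => prec3 p.1 (a, b, c)) L /\
    forall (V : lmodType algC) (rho : Lt -> V -> V) (v : V),
      is_rep rho -> F_rel m1 m2 n1 n2 rho v ->
      Xs rho (a, b, c) v + \sum_(p <- L) Unm_act rho p.2 (Xs rho p.1 v) = 0.
Proof.
move=> ha hab; set K := ((m1 + n1).+1 - 2 * a)%N.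
exists (relation_list (a, b, c) K 0 (fun j => (a, j + (b - K), K + c - j)%N)
          (fun j => ('C(K + c, j) * K ^_ j)%:R)); split.
  rewrite all_map; apply/allP => j; rewrite mem_index_iota => /andP[_ hj].
  by rewrite /prec3 /succ3 /=; lia.
move=> V rho v hr hF; apply: (relation_list_spec hr).
- by rewrite pnatr_eq0 -lt0n muln_gt0 bin_gt0 ffact_gt0 leq_addr leqnn.
- by congr (_, _, _); lia.
- by apply: (relation_alpha1 hr hF) => //; lia.
Qed.

(* Case 2c + b > m2 + n2 (with c <= min(m2,n2)): the terms have the same c
   and larger a. *)
Lemma alpha2_case m1 m2 n1 n2 a b c :
  (c <= minn m2 n2)%N -> (m2 + n2 < 2 * c + b)%N ->
  exists L : seq ((nat * nat * nat) * Unm),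
    all (fun p => prec3 p.1 (a, b, c)) L /\
    forall (V : lmodType algC) (rho : Lt -> V -> V) (v : V),
      is_rep rho -> F_rel m1 m2 n1 n2 rho v ->
      Xs rho (a, b, c) v + \sum_(p <- L) Unm_act rho p.2 (Xs rho p.1 v) = 0.
Proof.
move=> hc hcb; set K := ((m2 + n2).+1 - 2 * c)%N.
exists (relation_list (a, b, c) K 1 (fun j => (K + a - j, j + (b - K), c)%N)
          (fun j => (-1) ^+ j * ('C(K + a, j) * K ^_ j)%:R)); split.
  rewrite all_map; apply/allP => j; rewrite mem_index_iota => /andP[_ hj].
  by rewrite /prec3 /succ3 /=; lia.
move=> V rho v hr hF; apply: (relation_list_spec hr).
- by rewrite mulf_eq0 signr_eq0 pnatr_eq0 -lt0n muln_gt0 bin_gt0 ffact_gt0 leq_addr leqnn.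
- by congr (_, _, _); lia.
- by apply: (relation_alpha2 hr hF) => //; lia.
Qed.

Theorem proposition4p1 (m1 m2 n1 n2 : nat) (s : nat * nat * nat) :
  ~~ inSA m1 m2 n1 n2 s ->
  exists L : seq ((nat * nat * nat) * Unm),
    all (fun p => prec3 p.1 s) L /\
    forall (V : lmodType algC) (rho : Lt -> V -> V) (v : V),
      is_rep rho -> F_rel m1 m2 n1 n2 rho v ->
      Xs rho s v + \sum_(p <- L) Unm_act rho p.2 (Xs rho p.1 v) = 0.
Proof.
case: s => [[a b] c] hs.
have [hvan|] := boolP [|| minn m1 n1 < a, minn m2 n2 < c
                         | minn (m1 + m2) (n1 + n2) < a + b + c]%N.
  exists [::]; split=> // V rho v hr hF.
  by rewrite big_nil addr0; exact: (vanishing_case hvan).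
rewrite !negb_or -!leqNgt => /and3P[ha hc habc].
have [hab|hab] := ltnP (m1 + n1) (2 * a + b); first exact: alpha1_case.
apply: alpha2_case => //; move: hs.
by rewrite /inSA ha hc habc hab /= -ltnNge.
Qed.
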